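(* Let $\mathbf{A}\in\mathbb{R}^{M\times N}$, $\mathbf{Y}\in\mathbb{R}^{M\times L}$, and let $(\mathbf{g}(t),\mathbf{V}(t))$, $t\ge0$, evolve under the continuous gradient flow of $\mathcal{L}(\mathbf{g},\mathbf{V})=\Vert\mathbf{Y}-\mathbf{A}((\mathbf{g}^{\odot 2}\mathbf{1}_L)\odot\mathbf{V})\Vert_F^2$. Let $\mathbf{X}(t)=(\mathbf{g}(t)^{\odot 2}\mathbf{1}_L)\odot\mathbf{V}(t)$ and $\boldsymbol{\Lambda}(t)=\mathbf{A}^\top(\mathbf{Y}-\mathbf{A}\mathbf{X}(t))$. Then for every row $l\in[N]$ and every $t\ge0$, $$\frac12\frac{d}{dt}g_l^2(t)=\sum_{j\in[L]}\frac{d}{dt}V_{lj}^2(t)=4\sum_{j\in[L]}(\boldsymbol{\Lambda}(t)\odot\mathbf{X}(t))_{lj}=4\left(\boldsymbol{\Lambda}(t)\mathbf{X}(t)^\top\right)_{ll}.$$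
   Context: $\odot$ is the entrywise product and $\mathbf{1}_L$ the $1\times L$ all-ones row vector, so $X_{ij}=g_i^2V_{ij}$. Gradient flow: $\frac{d}{dt}g_l=-\partial\mathcal{L}/\partial g_l$, $\frac{d}{dt}V_{lm}=-\partial\mathcal{L}/\partial V_{lm}$ along the curve. *)

From HB Require Import structures.
From mathcomp Require Import all_boot all_order all_algebra.
From mathcomp Require Import all_classical all_reals.
From mathcomp Require Import topology normedtype derive.
Set Implicit Arguments. Unset Strict Implicit. Unset Printing Implicit Defensive.
Import Order.TTheory GRing.Theory Num.Theory.
Import numFieldNormedType.Exports.
Local Open Scope ring_scope.

Definition hadamard (R : pzRingType) m n (A B : 'M[R]_(m, n)) : 'M[R]_(m, n) :=
  map2_mx (fun a b => a * b) A B.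

Definition esq (R : pzRingType) m n (A : 'M[R]_(m, n)) : 'M[R]_(m, n) :=
  map_mx (fun a => a ^+ 2) A.

Definition ones_row (R : pzRingType) L : 'rV[R]_L := const_mx 1.

Definition Xmat (R : pzRingType) N L (g : 'cV[R]_N) (V : 'M[R]_(N, L)) : 'M[R]_(N, L) :=
  hadamard (esq g *m ones_row R L) V.

Definition frob2 (R : pzRingType) m n (B : 'M[R]_(m, n)) : R :=
  \sum_(i < m) \sum_(j < n) (B i j) ^+ 2.

Definition loss (R : pzRingType) M N L (A : 'M[R]_(M, N)) (Y : 'M[R]_(M, L))
  (g : 'cV[R]_N) (V : 'M[R]_(N, L)) : R :=
  frob2 (Y - A *m Xmat g V).

Definition dloss_dg (R : realType) M N L (A : 'M[R]_(M, N)) (Y : 'M[R]_(M, L))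
  (g : 'cV[R]_N) (V : 'M[R]_(N, L)) (l : 'I_N) : R :=
  derive1 (fun s : R => loss A Y (\col_i (if i == l then s else g i 0)) V) (g l 0).

Definition dloss_dV (R : realType) M N L (A : 'M[R]_(M, N)) (Y : 'M[R]_(M, L))
  (g : 'cV[R]_N) (V : 'M[R]_(N, L)) (l : 'I_N) (m : 'I_L) : R :=
  derive1 (fun s : R => loss A Y g
     (\matrix_(i, j) (if (i == l) && (j == m) then s else V i j))) (V l m).

Definition gradient_flow (R : realType) M N L (A : 'M[R]_(M, N)) (Y : 'M[R]_(M, L))
  (g : R -> 'cV[R]_N) (V : R -> 'M[R]_(N, L)) : Prop :=
  forall t : R, 0 <= t ->
    (forall l : 'I_N,
       is_derive t (1 : R) (fun s => g s l 0) (- dloss_dg A Y (g t) (V t) l)) /\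
    (forall (l : 'I_N) (m : 'I_L),
       is_derive t (1 : R) (fun s => V s l m) (- dloss_dV A Y (g t) (V t) l m)).

From HB Require Import structures.
From mathcomp Require Import all_boot all_order all_algebra.
From mathcomp Require Import all_classical all_reals.
From mathcomp Require Import topology normedtype derive.
From mathcomp Require Import ring.
Set Implicit Arguments. Unset Strict Implicit. Unset Printing Implicit Defensive.
Import Order.TTheory GRing.Theory Num.Theory.
Import numFieldNormedType.Exports.
Local Open Scope ring_scope.

(* Differentiating the loss along a curve s |-> F s of matrices gives
   d/ds ||Y - A F||_F^2 = -2 <A^T (Y - A F), F'>, with <B, C> = tr (B^T C) the
   Frobenius inner product.  Perturbing one coordinate of g or of V, for which
   F = X changes only in row l, yields dL/dV_lm = -2 g_l^2 Lam_lm and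
   dL/dg_l = -4 g_l sum_j Lam_lj V_lj.  Along the flow the chain rule then gives
   d(V_lj^2)/dt = 2 V_lj (2 g_l^2 Lam_lj) = 4 Lam_lj X_lj and
   d(g_l^2)/dt = 2 g_l (4 g_l sum_j Lam_lj V_lj) = 8 sum_j Lam_lj X_lj. *)

Definition frob_dot (R : pzRingType) m n (B C : 'M[R]_(m, n)) : R := \tr (B^T *m C).

Section FrobeniusInnerProduct.
Variable R : comPzRingType.

Lemma frob_dotE m n (B C : 'M[R]_(m, n)) :
  frob_dot B C = \sum_(i < m) \sum_(j < n) B i j * C i j.
Proof.
rewrite /frob_dot /mxtrace exchange_big; apply: eq_bigr => i _.
by rewrite mxE; apply: eq_bigr => j _; rewrite mxE.
Qed.

Lemma frob_dot_mulmxr m n p (B : 'M[R]_(m, p)) (A : 'M[R]_(m, n)) (D : 'M[R]_(n, p)) :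
  frob_dot B (A *m D) = frob_dot (A^T *m B) D.
Proof. by rewrite /frob_dot trmx_mul trmxK mulmxA. Qed.

Lemma frob_dotNr m n (B C : 'M[R]_(m, n)) : frob_dot B (- C) = - frob_dot B C.
Proof. by rewrite /frob_dot mulmxN linearN. Qed.

Lemma frob_dot_row_support m n (B C : 'M[R]_(m, n)) l :
  (forall k j, k != l -> C k j = 0) ->
  frob_dot B C = \sum_(j < n) B l j * C l j.
Proof.
move=> C0; rewrite frob_dotE (bigD1 l) //= [X in _ + X]big1 ?addr0 // => k kl.
by apply: big1 => j _; rewrite C0 ?mulr0.
Qed.

Lemma sum_hadamard_row m n (B C : 'M[R]_(m, n)) l :
  \sum_(j < n) hadamard B C l j = (B *m C^T) l l.
Proof. by rewrite mxE; apply: eq_bigr => j _; rewrite !mxE. Qed.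

End FrobeniusInnerProduct.

Section CurveDerivatives.
Variable R : realType.
Implicit Types (f : R -> R) (x df : R).

Lemma derive1_val f x df : is_derive x 1 f df -> derive1 f x = df.
Proof. by move=> fx; rewrite derive1E derive_val. Qed.

Lemma is_derive_sqr f x df :
  is_derive x 1 f df -> is_derive x 1 (fun s => f s ^+ 2) (2 * f x * df).
Proof.
move=> fx; have := is_deriveX 2 fx; rewrite exprfctE expr1 => /is_derive_eq; apply.
by rewrite mulrC.
Qed.

Lemma is_deriveMl f c x df :
  is_derive x 1 f df -> is_derive x 1 (fun s => c * f s) (c * df).
Proof. exact: is_deriveZ. Qed.

Lemma is_derive_sum_pt n (F : 'I_n -> R -> R) x (dF : 'I_n -> R) :
  (forall i, is_derive x 1 (F i) (dF i)) ->
  is_derive x 1 (fun s => \sum_(i < n) F i s) (\sum_(i < n) dF i).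
Proof. by move=> Fx; rewrite -fct_sumE; exact: is_derive_sum. Qed.

Definition is_derive_mx m n x (B : R -> 'M[R]_(m, n)) (dB : 'M[R]_(m, n)) :=
  forall i j, is_derive x 1 (fun s => B s i j) (dB i j).

Lemma is_derive_frob2 m n x (B : R -> 'M[R]_(m, n)) dB :
  is_derive_mx x B dB -> is_derive x 1 (fun s => frob2 (B s)) (2 * frob_dot (B x) dB).
Proof.
move=> Bx; apply: is_derive_eq.
  by apply: is_derive_sum_pt => i; apply: is_derive_sum_pt => j; apply: is_derive_sqr.
rewrite frob_dotE mulr_sumr; apply: eq_bigr => i _.
by rewrite mulr_sumr; apply: eq_bigr => j _; rewrite mulrA.
Qed.

Lemma is_derive_residual p m n (A : 'M[R]_(p, m)) (Y : 'M[R]_(p, n)) x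
    (F : R -> 'M[R]_(m, n)) dF :
  is_derive_mx x F dF -> is_derive_mx x (fun s => Y - A *m F s) (- (A *m dF)).
Proof.
move=> Fx i j; rewrite !mxE -sub0r; under eq_fun do rewrite !mxE.
by apply: is_deriveB; apply: is_derive_sum_pt => k; apply: is_deriveMl.
Qed.

End CurveDerivatives.

Section GradientOfTheLoss.
Variable R : realType.
Variables M N L : nat.
Variables (A : 'M[R]_(M, N)) (Y : 'M[R]_(M, L)).

Lemma is_derive_frob2_residual x (F : R -> 'M[R]_(N, L)) dF :
  is_derive_mx x F dF ->
  is_derive x 1 (fun s => frob2 (Y - A *m F s))
    (-2 * frob_dot (A^T *m (Y - A *m F x)) dF).
Proof.
move=> Fx; apply: is_derive_eq (is_derive_frob2 (is_derive_residual A Y Fx)) _.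
by rewrite frob_dotNr frob_dot_mulmxr mulrN mulNr.
Qed.

Lemma XmatE (G : 'cV[R]_N) (W : 'M[R]_(N, L)) k j : Xmat G W k j = G k 0 ^+ 2 * W k j.
Proof. by rewrite /Xmat /hadamard !mxE big_ord1 !mxE mulr1. Qed.

Lemma is_derive_Xmat_g (G : 'cV[R]_N) (W : 'M[R]_(N, L)) l :
  is_derive_mx (G l 0) (fun s => Xmat (\col_i (if i == l then s else G i 0)) W)
    (\matrix_(k, j) (if k == l then 2 * G l 0 * W l j else 0)).
Proof.
move=> k j; rewrite mxE; under eq_fun do rewrite XmatE mxE.
have [->|_] := eqVneq k l; last exact: is_derive_cst.
under eq_fun do rewrite mulrC.
have := is_deriveMl (W l j) (is_derive_sqr (is_derive_id (G l 0) 1)).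
by move=> /is_derive_eq; apply; rewrite mulr1 mulrC.
Qed.

Lemma is_derive_Xmat_V (G : 'cV[R]_N) (W : 'M[R]_(N, L)) l m :
  is_derive_mx (W l m)
    (fun s => Xmat G (\matrix_(i, j) (if (i == l) && (j == m) then s else W i j)))
    (\matrix_(k, j) (if (k == l) && (j == m) then G l 0 ^+ 2 else 0)).
Proof.
move=> k j; rewrite mxE; under eq_fun do rewrite XmatE mxE.
case: ((k == l) && (j == m)) / andP => [[/eqP-> _]|_]; last exact: is_derive_cst.
have := is_deriveMl (G l 0 ^+ 2) (is_derive_id (W l m) 1).
by move=> /is_derive_eq; apply; rewrite mulr1.
Qed.

Lemma dloss_dgE (G : 'cV[R]_N) (W : 'M[R]_(N, L)) l :
  dloss_dg A Y G W l
    = -4 * G l 0 * \sum_(j < L) (A^T *m (Y - A *m Xmat G W)) l j * W l j.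
Proof.
rewrite /dloss_dg /loss; apply: derive1_val.
apply: is_derive_eq; first exact/is_derive_frob2_residual/is_derive_Xmat_g.
have -> : \col_i (if i == l then G l 0 else G i 0) = G.
  by apply/matrixP => i j; rewrite !mxE ord1; case: eqP => [->|].
rewrite (frob_dot_row_support _ (l := l)) => [|k j /negbTE kl]; last by rewrite mxE kl.
by rewrite !mulr_sumr; apply: eq_bigr => j _; rewrite !mxE eqxx; ring.
Qed.

Lemma dloss_dVE (G : 'cV[R]_N) (W : 'M[R]_(N, L)) l m :
  dloss_dV A Y G W l m = -2 * G l 0 ^+ 2 * (A^T *m (Y - A *m Xmat G W)) l m.
Proof.
rewrite /dloss_dV /loss; apply: derive1_val.
apply: is_derive_eq; first exact/is_derive_frob2_residual/is_derive_Xmat_V.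
have -> : \matrix_(i, j) (if (i == l) && (j == m) then W l m else W i j) = W.
  by apply/matrixP => i j; rewrite !mxE; case: andP => // [[/eqP-> /eqP->]].
rewrite (frob_dot_row_support _ (l := l)) => [|k j /negbTE kl]; last by rewrite mxE kl.
rewrite (bigD1 m) //= big1 => [|j /negbTE jm]; last by rewrite mxE eqxx jm mulr0.
by rewrite mxE !eqxx addr0 /=; ring.
Qed.

End GradientOfTheLoss.

Theorem lemmaB2 (R : realType) (M N L : nat)
  (A : 'M[R]_(M, N)) (Y : 'M[R]_(M, L))
  (g : R -> 'cV[R]_N) (V : R -> 'M[R]_(N, L)) :
  gradient_flow A Y g V ->
  let X := fun t => Xmat (g t) (V t) in
  let Lam := fun t => A^T *m (Y - A *m X t) in
  forall (l : 'I_N) (t : R), 0 <= t ->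
    [/\ 2^-1 * derive1 (fun s => (g s l 0) ^+ 2) t
          = \sum_(j < L) derive1 (fun s => (V s l j) ^+ 2) t,
        \sum_(j < L) derive1 (fun s => (V s l j) ^+ 2) t
          = 4 * \sum_(j < L) (hadamard (Lam t) (X t)) l j
      & 4 * \sum_(j < L) (hadamard (Lam t) (X t)) l j
          = 4 * (Lam t *m (X t)^T) l l].
Proof.
move=> flow X Lam l t t_ge0; have [dg dV] := flow t t_ge0.
have dV2 j : derive1 (fun s => V s l j ^+ 2) t = 4 * (Lam t l j * X t l j).
  by rewrite (derive1_val (is_derive_sqr (dV l j))) dloss_dVE /Lam /X XmatE; ring.
have dg2 : derive1 (fun s => g s l 0 ^+ 2) t = 8 * \sum_(j < L) Lam t l j * X t l j.
  rewrite (derive1_val (is_derive_sqr (dg l))) dloss_dgE /Lam /X.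
  under [in RHS]eq_bigr do rewrite XmatE mulrCA.
  by rewrite -mulr_sumr; ring.
have sum_had : \sum_(j < L) hadamard (Lam t) (X t) l j = \sum_(j < L) Lam t l j * X t l j.
  by apply: eq_bigr => j _; rewrite mxE.
rewrite (eq_bigr _ (fun j _ => dV2 j)) -mulr_sumr; split.
- by rewrite dg2; field.
- by rewrite sum_had.
- by rewrite sum_hadamard_row.
Qed.
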